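(* Let $n=2$, $m=1$, $c_1=10$, so $\mathcal{X}=\{0,1,\dots,10\}$. Suppose bidder 2 answers every demand query at price $p\ge0$ as follows: if $p<94/10$ she answers $10$; if $p=94/10$ she answers either $10$ or $0$; if $p>94/10$ she answers $0$. Let $\{p^1,\dots,p^{\ell}\}\subset[0,\infty)$ be the finite set of prices at which bidder 2 is queried, with responses $x_2^*(p^r)$. For $\lambda>0$ let $\theta^*$ be any (local) minimizer of the L2-regularized loss $$L^{\lambda}(\theta)=\sum_{r=1}^{\ell}\Big(\mathcal{M}_\theta(\hat x_2^*(p^r))-p^r\hat x_2^*(p^r)-\big(\mathcal{M}_\theta(x_2^*(p^r))-p^r x_2^*(p^r)\big)\Big)^+ +\lambda\|\theta\|_2^2,$$ where $\hat x_2^*(p^r)\in\arg\max_{x\in\mathcal{X}}\big(\mathcal{M}_\theta(x)-p^r x\big)$ and $\mathcal{M}_\theta$ is an MVNN. Then the MVNN $\mathcal{M}_{\theta^*}:\mathcal{X}\to\mathbb{R}$ is linear.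
   Context: An MVNN (monotone-value neural network) on $\mathcal{X}=\{0,\dots,c_1\}\times\cdots\times\{0,\dots,c_m\}$ with parameters $\theta=(W,b)$ is $\mathcal{M}_\theta(x)=W^{K}\varphi_{0,t^{K-1}}\big(\cdots\varphi_{0,t^{1}}(W^{1}(Dx)+b^{1})\cdots\big)$, where $D=\mathrm{diag}(1/c_1,\dots,1/c_m)$ is a fixed normalization, the weight matrices $W^k$ (trainable) have nonnegative entries, the biases $b^k$ (trainable) have nonpositive entries, and the activation is the bounded ReLU $\varphi_{0,t}(z)=\min(t,\max(0,z))$ applied componentwise with fixed cutoffs $t^k>0$ (no linear skip connections). $\|\theta\|_2^2$ is the sum of squares of all weights and biases. ''Linear'' means $\mathcal{M}_{\theta^*}(x)=\alpha x$ for all $x\in\mathcal{X}$, for some constant $\alpha$. $(\cdot)^+=\max(\cdot,0)$. *)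

From mathcomp Require Import all_boot all_order all_algebra.
From mathcomp Require Import reals.
Set Implicit Arguments. Unset Strict Implicit. Unset Printing Implicit Defensive.
Import Order.TTheory GRing.Theory Num.Theory.
Local Open Scope ring_scope.

(* Widths: layer k (k >= 1) has width d (k-1); the input layer (k = 0) has
   width 1 (m = 1 item). *)
Definition wd (d : nat -> nat) (k : nat) : nat :=
  if k is k'.+1 then d k' else 1%N.

(* Parameters of an MVNN with H hidden layers of widths d 0, ..., d (H-1).
   mW k : hidden weight matrix W^{k+1}, mb k : hidden bias b^{k+1} (k < H),
   mWout : output weights W^K (K = H+1).  Entries with index k >= H are
   unused (they do not enter the network, the norm, nor the distance). *)
Record mvnn_params (R : Type) (H : nat) (d : nat -> nat) := MvnnParams {
  mW : forall k : nat, 'M[R]_(wd d k.+1, wd d k);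
  mb : forall k : nat, 'cV[R]_(wd d k.+1);
  mWout : 'rV[R]_(wd d H) }.

Section MVNN.
Variables (R : realType) (H : nat) (d : nat -> nat) (t : nat -> R).

Definition brelu (c z : R) : R := Num.min c (Num.max 0 z).

(* output of hidden layer k; layer 0 is the normalized input D x = x / 10 *)
Fixpoint mvnn_hidden (th : mvnn_params R H d) (x : R) (k : nat)
  : 'cV[R]_(wd d k) :=
  match k return 'cV[R]_(wd d k) with
  | 0 => const_mx (x / 10%:R)
  | k'.+1 => map_mx (brelu (t k'))
               (mW th k' *m mvnn_hidden th x k' + mb th k')
  end.

Definition mvnn_eval (th : mvnn_params R H d) (x : R) : R :=
  (mWout th *m mvnn_hidden th x H) 0 0.

Definition mvnn_feasible (th : mvnn_params R H d) : Prop :=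
  (forall k : 'I_H, (forall i j, 0 <= mW th k i j) /\ (forall i, mb th k i 0 <= 0))
  /\ (forall j, 0 <= mWout th 0 j).

Definition mvnn_sqdist (th1 th2 : mvnn_params R H d) : R :=
  \sum_(k < H) (\sum_i \sum_j (mW th1 k i j - mW th2 k i j) ^+ 2
                + \sum_i (mb th1 k i 0 - mb th2 k i 0) ^+ 2)
  + \sum_j (mWout th1 0 j - mWout th2 0 j) ^+ 2.

Definition mvnn_sqnorm (th : mvnn_params R H d) : R :=
  \sum_(k < H) (\sum_i \sum_j (mW th k i j) ^+ 2 + \sum_i (mb th k i 0) ^+ 2)
  + \sum_j (mWout th 0 j) ^+ 2.

Definition mvnn_util (th : mvnn_params R H d) (p : R) (x : nat) : R :=
  mvnn_eval th x%:R - p * x%:R.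

(* max_{x in X} (M_th(x) - p x) = M_th(hat x) - p hat x for any argmax hat x *)
Definition mvnn_maxutil (th : mvnn_params R H d) (p : R) : R :=
  \big[Num.max/mvnn_util th p 0]_(x < 11) mvnn_util th p x.

Definition mvnn_loss (ps : seq R) (ans : R -> nat) (lam : R)
  (th : mvnn_params R H d) : R :=
  \sum_(p <- ps) Num.max 0 (mvnn_maxutil th p - mvnn_util th p (ans p))
  + lam * mvnn_sqnorm th.

Definition mvnn_local_min (ps : seq R) (ans : R -> nat) (lam : R)
  (th : mvnn_params R H d) : Prop :=
  mvnn_feasible th /\
  exists2 eps : R, 0 < eps &
    forall th' : mvnn_params R H d, mvnn_feasible th' ->
      mvnn_sqdist th' th < eps ->
      mvnn_loss ps ans lam th <= mvnn_loss ps ans lam th'.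

End MVNN.

(* Since every answer is 0 or 10 and M(0) = 0, the data term depends on M only
   through M(10) and the maximal utilities; if no neuron is saturated at the
   input 10, then M(x) <= (x/10) M(10) and the maximal utility at price p is
   max(0, M(10) - 10 p).
   Scaling rows of weights and all biases by factors in [1 - s, 1] never
   increases the norm, and keeps it only if the shrunk entries vanish.  At a
   local minimizer this rules out, first, a neuron saturated at 10: shrinking
   its incoming weights a little keeps M(0) and M(10) and can only lower M
   elsewhere.  It then rules out nonzero biases: shrink them all by 1 - s and
   compensate in the weights so that every hidden value at 10 is kept.  A
   network without biases and unsaturated at 10 is linear on [0, 10]. *)

From mathcomp Require Import all_boot all_order all_algebra.
From mathcomp Require Import reals ring lra.
Import Order.TTheory GRing.Theory Num.Theory.
Set Implicit Arguments.
Unset Strict Implicit.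
Unset Printing Implicit Defensive.
Local Open Scope ring_scope.

Section BoundedReLU.
Variable R : realType.
Implicit Types c y z : R.

Lemma brelu_ge0 c z : 0 <= c -> 0 <= brelu c z.
Proof. by move=> c_ge0; rewrite le_min c_ge0 le_max lexx. Qed.

Lemma brelu_le_pos c z y : 0 <= y -> z <= y -> brelu c z <= y.
Proof. by move=> y_ge0 zy; rewrite ge_min ge_max y_ge0 zy orbT. Qed.

Lemma brelu_homo c : {homo brelu c : z1 z2 / z1 <= z2}.
Proof. by move=> z1 z2 z12; apply: le_min2 => //; apply: le_max2. Qed.

Lemma brelu_id c z : 0 <= z <= c -> brelu c z = z.
Proof. by case/andP=> z_ge0 zc; rewrite /brelu (max_idPr z_ge0) (min_idPr zc). Qed.

Lemma brelu_eq0 c z : 0 <= c -> z <= 0 -> brelu c z = 0.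
Proof. by move=> c_ge0 z_le0; rewrite /brelu (max_idPl z_le0) (min_idPr c_ge0). Qed.

Lemma brelu_sat c z : c <= z -> brelu c z = c.
Proof.
move=> cz; apply/min_idPl; rewrite le_max.
by case: (leP c 0) => // /ltW c_ge0; rewrite cz orbT.
Qed.

Lemma brelu_scale c l z :
  0 <= c -> 0 <= l <= 1 -> z <= c -> brelu c (l * z) = l * brelu c z.
Proof.
move=> c_ge0 /andP[l_ge0 l_le1] zc; have [z_ge0|z_lt0] := leP 0 z.
  by rewrite !brelu_id ?z_ge0 ?mulr_ge0 //=; nra.
by rewrite !brelu_eq0 ?mulr0 //; nra.
Qed.

Lemma brelu_mix_id c s z :
  0 <= c -> 0 <= s <= 1 -> z <= c -> brelu c ((1 - s) * z + s * brelu c z) = brelu c z.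
Proof.
move=> c_ge0 /andP[s_ge0 s_le1] zc; have [z_ge0|z_lt0] := leP 0 z.
  rewrite [brelu c z]brelu_id ?z_ge0 // (_ : (1 - s) * z + s * z = z); last by ring.
  by rewrite brelu_id ?z_ge0.
by rewrite (brelu_eq0 c_ge0 (ltW z_lt0)) mulr0 addr0 brelu_eq0 //; nra.
Qed.

End BoundedReLU.

Section ColumnProducts.
Variables (R : realType) (m n : nat).
Implicit Types (a : R) (A B : 'M[R]_(m, n)) (v w : 'cV[R]_n).

Lemma mulmx_ge0 A v i :
  (forall i j, 0 <= A i j) -> (forall j, 0 <= v j 0) -> 0 <= (A *m v) i 0.
Proof. by move=> A_ge0 v_ge0; rewrite mxE sumr_ge0 // => j _; rewrite mulr_ge0. Qed.

Lemma ler_mulmx A B v w i :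
  (forall i j, 0 <= A i j <= B i j) -> (forall j, 0 <= v j 0 <= w j 0) ->
  (A *m v) i 0 <= (B *m w) i 0.
Proof.
move=> AB vw; rewrite !mxE; apply: ler_sum => j _.
by case/andP: (AB i j) => ? ?; case/andP: (vw j) => ? ?; apply: ler_pM.
Qed.

Lemma mulmxZ_col a A v i : (A *m (a *: v)) i 0 = a * (A *m v) i 0.
Proof. by rewrite -scalemxAr mxE. Qed.

End ColumnProducts.

Section Network.
Variables (R : realType) (H : nat) (d : nat -> nat) (t : nat -> R).
Hypothesis t_gt0 : forall k, (k < H)%N -> 0 < t k.
Implicit Types (th : mvnn_params R H d) (x : R).

Let t_ge0 k (kH : (k < H)%N) : 0 <= t k := ltW (t_gt0 kH).

Definition mvnn_preact th k (h : 'cV[R]_(wd d k)) : 'cV[R]_(wd d k.+1) :=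
  mW th k *m h + mb th k.

Lemma mvnn_preactE th k h i : mvnn_preact th h i 0 = (mW th k *m h) i 0 + mb th k i 0.
Proof. by rewrite mxE. Qed.

Lemma mvnn_hidden0 th x i : mvnn_hidden t th x 0 i 0 = x / 10%:R.
Proof. by rewrite mxE. Qed.

Lemma mvnn_hiddenS th x k i :
  mvnn_hidden t th x k.+1 i 0 = brelu (t k) (mvnn_preact th (mvnn_hidden t th x k) i 0).
Proof. by rewrite mxE. Qed.

Lemma mvnn_feasible_W th k i j : mvnn_feasible th -> (k < H)%N -> 0 <= mW th k i j.
Proof. by case=> feas _ kH; case: (feas (Ordinal kH)). Qed.

Lemma mvnn_feasible_b th k i : mvnn_feasible th -> (k < H)%N -> mb th k i 0 <= 0.
Proof. by case=> feas _ kH; case: (feas (Ordinal kH)). Qed.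

Lemma mvnn_hidden_ge0 th x k i : 0 <= x -> (k <= H)%N -> 0 <= mvnn_hidden t th x k i 0.
Proof.
case: k i => [|k] i x_ge0 kH; first by rewrite mvnn_hidden0 divr_ge0.
by rewrite mvnn_hiddenS brelu_ge0 ?t_ge0.
Qed.

Lemma mvnn_hidden_at0 th k i :
  mvnn_feasible th -> (k <= H)%N -> mvnn_hidden t th 0 k i 0 = 0.
Proof.
move=> feas; elim: k i => [|k IH] i kH; first by rewrite mvnn_hidden0 mul0r.
rewrite mvnn_hiddenS mvnn_preactE mxE big1 ?add0r => [|j _]; last first.
  by rewrite IH ?mulr0 // ltnW.
by rewrite brelu_eq0 ?mvnn_feasible_b ?t_ge0.
Qed.

Lemma mvnn_eval_at0 th : mvnn_feasible th -> mvnn_eval t th 0 = 0.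
Proof.
by move=> feas; rewrite /mvnn_eval mxE big1 // => j _; rewrite mvnn_hidden_at0 ?mulr0.
Qed.

Lemma mvnn_hidden_le th1 th2 x k i :
  (forall k, (k < H)%N -> forall i j, 0 <= mW th1 k i j <= mW th2 k i j) ->
  (forall k, (k < H)%N -> mb th1 k = mb th2 k) ->
  0 <= x -> (k <= H)%N -> mvnn_hidden t th1 x k i 0 <= mvnn_hidden t th2 x k i 0.
Proof.
move=> W12 b12 x_ge0; elim: k i => [|k IH] i kH; first by rewrite !mvnn_hidden0.
rewrite !mvnn_hiddenS; apply: brelu_homo; rewrite !mvnn_preactE b12 // lerD2r.
apply: ler_mulmx => [|j]; first exact: W12.
by rewrite mvnn_hidden_ge0 ?IH // ltnW.
Qed.

Lemma mvnn_eval_le th1 th2 x :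
  (forall k, (k < H)%N -> forall i j, 0 <= mW th1 k i j <= mW th2 k i j) ->
  (forall k, (k < H)%N -> mb th1 k = mb th2 k) ->
  (forall j, 0 <= mWout th1 0 j <= mWout th2 0 j) ->
  0 <= x -> mvnn_eval t th1 x <= mvnn_eval t th2 x.
Proof.
move=> W12 b12 Wout12 x_ge0; apply: ler_mulmx => [i j|j]; first by rewrite [i]ord1.
by rewrite mvnn_hidden_ge0 ?mvnn_hidden_le.
Qed.

Lemma mvnn_hidden_eq th1 th2 x :
  (forall k, (k < H)%N -> forall i,
     brelu (t k) (mvnn_preact th1 (mvnn_hidden t th2 x k) i 0)
     = mvnn_hidden t th2 x k.+1 i 0) ->
  forall k, (k <= H)%N -> mvnn_hidden t th1 x k = mvnn_hidden t th2 x k.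
Proof.
move=> reprod; elim=> [|k IH] kH //; apply/matrixP => i j; rewrite ord1 -reprod //.
by rewrite mvnn_hiddenS IH // ltnW.
Qed.

Lemma mvnn_hidden_le_wsum th x k i :
  mvnn_feasible th -> 0 <= x -> (k < H)%N ->
  0 <= mvnn_hidden t th x k.+1 i 0 <= (mW th k *m mvnn_hidden t th x k) i 0.
Proof.
move=> feas x_ge0 kH; rewrite mvnn_hidden_ge0 //= mvnn_hiddenS mvnn_preactE.
apply: brelu_le_pos; last by rewrite gerDl mvnn_feasible_b.
by apply: mulmx_ge0 => [i' j|j]; rewrite ?mvnn_feasible_W ?mvnn_hidden_ge0 // ltnW.
Qed.

(* Where the weighted input is [0] the division returns [0]; the output is then [0] too. *)
Definition mvnn_gain th x k (i : 'I_(wd d k.+1)) : R :=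
  mvnn_hidden t th x k.+1 i 0 / (mW th k *m mvnn_hidden t th x k) i 0.

Lemma mvnn_gain_in01 th x k (i : 'I_(wd d k.+1)) :
  mvnn_feasible th -> 0 <= x -> (k < H)%N -> 0 <= mvnn_gain th x i <= 1.
Proof.
move=> feas x_ge0 kH; have /andP[u_ge0 u_le_c] := mvnn_hidden_le_wsum i feas x_ge0 kH.
rewrite /mvnn_gain; set c := (mW th k *m _) i 0 in u_le_c *.
have [c0|c_neq0] := eqVneq c 0; first by rewrite c0 invr0 mulr0 lexx ler01.
have c_gt0 : 0 < c by rewrite lt_def c_neq0 (le_trans u_ge0 u_le_c).
by rewrite divr_ge0 ?(ltW c_gt0) //= ler_pdivrMr // mul1r.
Qed.

Lemma mvnn_gainK th x k (i : 'I_(wd d k.+1)) :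
  mvnn_feasible th -> 0 <= x -> (k < H)%N ->
  mvnn_gain th x i * (mW th k *m mvnn_hidden t th x k) i 0 = mvnn_hidden t th x k.+1 i 0.
Proof.
move=> feas x_ge0 kH; have /andP[u_ge0 u_le_c] := mvnn_hidden_le_wsum i feas x_ge0 kH.
rewrite /mvnn_gain; set c := (mW th k *m _) i 0 in u_le_c *.
have [c0|c_neq0] := eqVneq c 0; last exact: divfK.
by rewrite c0 mulr0; apply/esym/le_anti; rewrite u_ge0 -c0 u_le_c.
Qed.

Definition mvnn_unsaturated th x :=
  forall k, (k < H)%N -> forall i, mvnn_preact th (mvnn_hidden t th x k) i 0 <= t k.

Lemma mvnn_hidden_subhom th x k i :
  mvnn_feasible th -> mvnn_unsaturated th 10%:R -> 0 <= x <= 10%:R -> (k <= H)%N ->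
  mvnn_hidden t th x k i 0 <= x / 10%:R * mvnn_hidden t th 10%:R k i 0.
Proof.
move=> feas unsat /andP[x_ge0 x_le10].
have l01 : 0 <= x / 10%:R <= 1 by rewrite divr_ge0 //= ler_pdivrMr // mul1r.
elim: k i => [|k IH] i kH.
  by rewrite !mvnn_hidden0 divff ?mulr1 // pnatr_eq0.
rewrite !mvnn_hiddenS -brelu_scale ?unsat ?t_ge0 //; apply: brelu_homo.
rewrite !mvnn_preactE mulrDr; apply: lerD; last first.
  by have := mvnn_feasible_b i feas kH; case/andP: l01; nra.
rewrite -mulmxZ_col; apply: ler_mulmx => [i' j|j].
  by rewrite mvnn_feasible_W ?lexx.
by rewrite mvnn_hidden_ge0 ?mxE ?IH ?(ltnW kH).
Qed.

Lemma mvnn_hidden_linear th x k :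
  (forall k, (k < H)%N -> forall i, mb th k i 0 = 0) -> mvnn_unsaturated th 10%:R ->
  0 <= x <= 10%:R -> (k <= H)%N ->
  mvnn_hidden t th x k = (x / 10%:R) *: mvnn_hidden t th 10%:R k.
Proof.
move=> b0 unsat /andP[x_ge0 x_le10].
have l01 : 0 <= x / 10%:R <= 1 by rewrite divr_ge0 //= ler_pdivrMr // mul1r.
elim: k => [|k IH] kH; apply/matrixP => i j; rewrite ord1.
  by rewrite !mxE divff ?mulr1 // pnatr_eq0.
rewrite [RHS]mxE !mvnn_hiddenS -brelu_scale ?unsat ?t_ge0 //.
by rewrite !mvnn_preactE !b0 // !addr0 IH ?(ltnW kH) // mulmxZ_col.
Qed.

Lemma mvnn_eval_subhom th x :
  mvnn_feasible th -> mvnn_unsaturated th 10%:R -> 0 <= x <= 10%:R ->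
  mvnn_eval t th x <= x / 10%:R * mvnn_eval t th 10%:R.
Proof.
move=> feas unsat x010; rewrite /mvnn_eval -mulmxZ_col.
have x_ge0 : 0 <= x by case/andP: x010.
apply: ler_mulmx => [i j|j]; last by rewrite mvnn_hidden_ge0 ?mxE ?mvnn_hidden_subhom.
by rewrite lexx andbT [i]ord1; case: feas.
Qed.

Lemma mvnn_eval_linear th x :
  (forall k, (k < H)%N -> forall i, mb th k i 0 = 0) -> mvnn_unsaturated th 10%:R ->
  0 <= x <= 10%:R -> mvnn_eval t th x = x / 10%:R * mvnn_eval t th 10%:R.
Proof.
by move=> b0 unsat x010; rewrite /mvnn_eval mvnn_hidden_linear // mulmxZ_col.
Qed.

End Network.

Section Rescaling.
Variables (R : realType) (H : nat) (d : nat -> nat).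
Implicit Types (th : mvnn_params R H d) (rho : forall k, 'I_(wd d k.+1) -> R) (beta : R).

Definition mvnn_rescale rho beta th : mvnn_params R H d :=
  MvnnParams (fun k => \matrix_(i, j) (rho k i * mW th k i j))
    (fun k => beta *: mb th k) (mWout th).

Lemma mvnn_rescale_W rho beta th k i j :
  mW (mvnn_rescale rho beta th) k i j = rho k i * mW th k i j.
Proof. by rewrite mxE. Qed.

Lemma mvnn_rescale_b rho beta th k i :
  mb (mvnn_rescale rho beta th) k i 0 = beta * mb th k i 0.
Proof. by rewrite mxE. Qed.

Lemma mvnn_preact_rescale rho beta th k (h : 'cV[R]_(wd d k)) i :
  mvnn_preact (mvnn_rescale rho beta th) h i 0
  = rho k i * (mW th k *m h) i 0 + beta * mb th k i 0.
Proof.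
rewrite mvnn_preactE mvnn_rescale_b !mxE mulr_sumr; congr (_ + _).
by apply: eq_bigr => j _; rewrite mxE mulrA.
Qed.

Lemma mvnn_rescale_feasible rho beta th :
  mvnn_feasible th -> (forall k, (k < H)%N -> forall i, 0 <= rho k i) -> 0 <= beta ->
  mvnn_feasible (mvnn_rescale rho beta th).
Proof.
move=> feas rho_ge0 beta_ge0; split=> [k|]; last by case: feas.
split=> [i j|i]; first by rewrite mvnn_rescale_W mulr_ge0 ?rho_ge0 ?mvnn_feasible_W.
by rewrite mvnn_rescale_b mulr_ge0_le0 ?mvnn_feasible_b.
Qed.

Lemma mvnn_sqnorm_ge0 th : 0 <= mvnn_sqnorm th.
Proof.
apply: addr_ge0; last by apply: sumr_ge0 => j _; exact: sqr_ge0.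
apply: sumr_ge0 => k _; apply: addr_ge0; apply: sumr_ge0 => i _; last exact: sqr_ge0.
by apply: sumr_ge0 => j _; exact: sqr_ge0.
Qed.

Lemma mvnn_rescale_sqdist rho beta th s :
  (forall k, (k < H)%N -> forall i, 1 - s <= rho k i <= 1) -> 1 - s <= beta <= 1 ->
  mvnn_sqdist (mvnn_rescale rho beta th) th <= s ^+ 2 * mvnn_sqnorm th.
Proof.
have scaled_sq a w : 1 - s <= a <= 1 -> (a * w - w) ^+ 2 <= s ^+ 2 * w ^+ 2.
  case/andP=> a_lb a_ub; have -> : a * w - w = (a - 1) * w by ring.
  by rewrite exprMn ler_wpM2r ?sqr_ge0 //; nra.
move=> rho_s beta_s; rewrite /mvnn_sqdist /mvnn_sqnorm mulrDr mulr_sumr.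
apply: lerD; last first.
  by rewrite mulr_sumr ler_sum // => j _; rewrite subrr expr0n mulr_ge0 ?sqr_ge0.
apply: ler_sum => k _; rewrite mulrDr !mulr_sumr; apply: lerD; apply: ler_sum => i _.
  by rewrite mulr_sumr; apply: ler_sum => j _; rewrite mvnn_rescale_W scaled_sq ?rho_s.
by rewrite mvnn_rescale_b scaled_sq.
Qed.

Lemma mvnn_rescale_sqnorm_ge_eq0 rho beta th :
  (forall k, (k < H)%N -> forall i, 0 <= rho k i <= 1) -> 0 <= beta <= 1 ->
  mvnn_sqnorm th <= mvnn_sqnorm (mvnn_rescale rho beta th) ->
  (forall k, (k < H)%N -> forall i, rho k i < 1 -> forall j, mW th k i j = 0) /\
  (beta < 1 -> forall k, (k < H)%N -> forall i, mb th k i 0 = 0).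
Proof.
move=> rho01 beta01 norm_le.
pose defect (a w : R) := (1 - a ^+ 2) * w ^+ 2.
have defect_ge0 (a w : R) : 0 <= a <= 1 -> 0 <= defect a w.
  by case/andP=> ? ?; rewrite mulr_ge0 ?sqr_ge0 //; nra.
have defect_eq0 (a w : R) : 0 <= a -> a < 1 -> defect a w = 0 -> w = 0.
  by move=> ? ? /eqP; rewrite mulf_eq0 sqrf_eq0 => /orP[/eqP|/eqP //]; nra.
pose Dw (k : 'I_H) i := \sum_j defect (rho k i) (mW th k i j).
pose Db (k : 'I_H) i := defect beta (mb th k i 0).
have Dw_ge0 (k : 'I_H) i : 0 <= Dw k i.
  by apply: sumr_ge0 => j _; rewrite defect_ge0 ?rho01.
have Db_ge0 (k : 'I_H) i : 0 <= Db k i by rewrite defect_ge0.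
pose D (k : 'I_H) := \sum_i Dw k i + \sum_i Db k i.
have D_ge0 k : 0 <= D k by rewrite addr_ge0 ?sumr_ge0.
have norm_gap :
    mvnn_sqnorm th - mvnn_sqnorm (mvnn_rescale rho beta th) = \sum_(k < H) D k.
  rewrite /mvnn_sqnorm /= opprD addrACA subrr addr0 -sumrB; apply: eq_bigr => k _.
  rewrite opprD addrACA -!sumrB; congr (_ + _); apply: eq_bigr => i _.
    by rewrite -sumrB; apply: eq_bigr => j _; rewrite !mxE /defect; ring.
  by rewrite /Db /defect !mxE; ring.
have layer_eq0 k : D k = 0.
  apply: (psumr_eq0P (P := xpredT) (F := D) (fun l _ => D_ge0 l)) => //.
  by apply/le_anti; rewrite -norm_gap subr_le0 norm_le norm_gap sumr_ge0.
split=> [k kH i rho_lt1 j|beta_lt1 k kH i].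
  have /eqP := layer_eq0 (Ordinal kH); rewrite paddr_eq0 ?sumr_ge0 //.
  case/andP=> /eqP /(psumr_eq0P (fun i _ => Dw_ge0 _ i)) /(_ i isT) Dw0 _.
  apply: defect_eq0 rho_lt1 _; first by case/andP: (rho01 k kH i).
  by apply: (psumr_eq0P _ Dw0) => // j' _; rewrite defect_ge0 ?(rho01 k kH).
have /eqP := layer_eq0 (Ordinal kH); rewrite paddr_eq0 ?sumr_ge0 //.
case/andP=> _ /eqP /(psumr_eq0P (fun i _ => Db_ge0 _ i)) /(_ i isT) Db0.
by apply: defect_eq0 beta_lt1 _; first by case/andP: beta01.
Qed.

End Rescaling.

Section DataLoss.
Variables (R : realType) (H : nat) (d : nat -> nat) (t : nat -> R).
Variables (ps : seq R) (ans : R -> nat).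
Hypothesis ans_0_10 : forall p, p \in ps -> ans p = 0%N \/ ans p = 10%N.
Implicit Types (th : mvnn_params R H d) (p : R).

Definition mvnn_hinge th : R :=
  \sum_(p <- ps) Num.max 0 (mvnn_maxutil t th p - mvnn_util t th p (ans p)).

Lemma mvnn_lossE lam th :
  mvnn_loss t ps ans lam th = mvnn_hinge th + lam * mvnn_sqnorm th.
Proof. by []. Qed.

Lemma mvnn_util_le_maxutil th p x : (x <= 10)%N -> mvnn_util t th p x <= mvnn_maxutil t th p.
Proof. by rewrite -ltnS => x_lt11; exact: (le_bigmax _ _ (Ordinal x_lt11)). Qed.

Lemma mvnn_maxutil_le_eval th1 th2 p :
  (forall x, (x <= 10)%N -> mvnn_eval t th1 x%:R <= mvnn_eval t th2 x%:R) ->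
  mvnn_maxutil t th1 p <= mvnn_maxutil t th2 p.
Proof.
move=> le12; apply: bigmax_le => [|x _]; last first.
  by apply: le_trans (mvnn_util_le_maxutil _ _ (leq_ord x)); rewrite lerD2r le12 ?leq_ord.
by apply: le_trans (mvnn_util_le_maxutil _ _ (leq0n 10)); rewrite lerD2r le12.
Qed.

Lemma mvnn_maxutil_le_subhom th1 th2 p :
  mvnn_eval t th1 0 = 0 -> mvnn_eval t th2 0 = 0 ->
  mvnn_eval t th1 10%:R = mvnn_eval t th2 10%:R ->
  (forall x, (x <= 10)%N -> mvnn_eval t th1 x%:R <= x%:R / 10%:R * mvnn_eval t th1 10%:R) ->
  mvnn_maxutil t th1 p <= mvnn_maxutil t th2 p.
Proof.
move=> eval1_0 eval2_0 eval10 subhom.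
have util2_0 : mvnn_util t th2 p 0 = 0 by rewrite /mvnn_util eval2_0 mulr0 subr0.
have max2_ge : Num.max 0 (mvnn_util t th1 p 10) <= mvnn_maxutil t th2 p.
  rewrite ge_max -util2_0 !mvnn_util_le_maxutil //.
  by rewrite (_ : mvnn_util t th1 p 10 = mvnn_util t th2 p 10) ?mvnn_util_le_maxutil //
    /mvnn_util eval10.
apply: le_trans max2_ge; apply: bigmax_le => [|x _].
  by rewrite /mvnn_util eval1_0 mulr0 subr0 le_max lexx.
have x_le10 : (x <= 10)%N by rewrite -ltnS.
have /andP[l_ge0 l_le1] : 0 <= (x%:R : R) / 10%:R <= 1.
  by rewrite divr_ge0 //= ler_pdivrMr // mul1r ler_nat.
have px : p * x%:R = x%:R / 10%:R * (p * 10%:R) by field.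
rewrite /mvnn_util px.
apply: (@le_trans _ _ (x%:R / 10%:R * (mvnn_eval t th1 10%:R - p * 10%:R))).
  by rewrite mulrBr lerD2r subhom.
rewrite le_max; case: (leP 0 (mvnn_eval t th1 10%:R - p * 10%:R)) => [y_ge0|/ltW y_le0].
  by rewrite ler_piMl ?orbT.
by rewrite mulr_ge0_le0.
Qed.

Lemma mvnn_hinge_le th1 th2 :
  (forall p, p \in ps -> mvnn_maxutil t th1 p <= mvnn_maxutil t th2 p) ->
  mvnn_eval t th1 0 = mvnn_eval t th2 0 -> mvnn_eval t th1 10%:R = mvnn_eval t th2 10%:R ->
  mvnn_hinge th1 <= mvnn_hinge th2.
Proof.
move=> max12 eval0 eval10; rewrite /mvnn_hinge !big_seq; apply: ler_sum => p ps_p.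
apply: le_max2 => //; apply: lerB; first exact: max12.
by rewrite /mvnn_util; case: (ans_0_10 ps_p) => ->; rewrite ?eval0 ?eval10.
Qed.

Lemma mvnn_hinge_le_eval th1 th2 :
  (forall x, (x <= 10)%N -> mvnn_eval t th1 x%:R <= mvnn_eval t th2 x%:R) ->
  mvnn_eval t th1 0 = mvnn_eval t th2 0 -> mvnn_eval t th1 10%:R = mvnn_eval t th2 10%:R ->
  mvnn_hinge th1 <= mvnn_hinge th2.
Proof. by move=> le12; apply: mvnn_hinge_le => p _; apply: mvnn_maxutil_le_eval. Qed.

Lemma mvnn_hinge_le_subhom th1 th2 :
  mvnn_eval t th1 0 = 0 -> mvnn_eval t th2 0 = 0 ->
  mvnn_eval t th1 10%:R = mvnn_eval t th2 10%:R ->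
  (forall x, (x <= 10)%N -> mvnn_eval t th1 x%:R <= x%:R / 10%:R * mvnn_eval t th1 10%:R) ->
  mvnn_hinge th1 <= mvnn_hinge th2.
Proof.
move=> eval1_0 eval2_0 eval10 subhom; apply: mvnn_hinge_le; rewrite ?eval1_0 //.
by move=> p _; apply: mvnn_maxutil_le_subhom.
Qed.

End DataLoss.

Section LocalMinimizer.
Variables (R : realType) (H : nat) (d : nat -> nat) (t : nat -> R).
Variables (ps : seq R) (ans : R -> nat).
Implicit Types (th : mvnn_params R H d) (rho : forall k, 'I_(wd d k.+1) -> R) (beta s : R).

Definition mvnn_rescale_stable s th :=
  (0 < s <= 1) /\
  (forall rho beta,
    (forall k, (k < H)%N -> forall i, 1 - s <= rho k i <= 1) -> 1 - s <= beta <= 1 ->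
    mvnn_hinge t ps ans (mvnn_rescale rho beta th) <= mvnn_hinge t ps ans th ->
    mvnn_sqnorm th <= mvnn_sqnorm (mvnn_rescale rho beta th)).

Lemma mvnn_local_min_rescale_stable lam th :
  0 < lam -> mvnn_local_min t ps ans lam th -> exists s, mvnn_rescale_stable s th.
Proof.
move=> lam_gt0 [feas [eps eps_gt0 minimal]].
have N_ge0 := mvnn_sqnorm_ge0 th; set N := mvnn_sqnorm th in N_ge0 *.
have N1_gt0 : 0 < N + 1 by rewrite ltr_wpDl.
pose s := Num.min 1 (eps / (N + 1)).
have s_gt0 : 0 < s by rewrite lt_min ltr01 divr_gt0.
have s_le1 : s <= 1 by rewrite ge_min lexx.
have sN_lt_eps : s * N < eps.
  apply: le_lt_trans (_ : eps / (N + 1) * N < eps).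
    by rewrite ler_wpM2r // ge_min lexx orbT.
  by rewrite mulrAC ltr_pdivrMr // ltr_pM2l // ltrDl.
exists s; split=> [|rho beta rho_s beta_s hinge_le]; first by rewrite s_gt0.
have feas' : mvnn_feasible (mvnn_rescale rho beta th).
  apply: mvnn_rescale_feasible => // [k kH i|]; last by case/andP: beta_s => ? ?; lra.
  by case/andP: (rho_s k kH i) => ? ?; lra.
have dist_lt : mvnn_sqdist (mvnn_rescale rho beta th) th < eps.
  apply: le_lt_trans (mvnn_rescale_sqdist th rho_s beta_s) _.
  by apply: le_lt_trans sN_lt_eps; rewrite ler_wpM2r // expr2 ler_piMl // ltW.
have := minimal _ feas' dist_lt; rewrite !mvnn_lossE -/N => loss_le.
by rewrite -(ler_pM2l lam_gt0); lra.
Qed.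

Section Stable.
Variables (th : mvnn_params R H d) (s : R).
Hypothesis t_gt0 : forall k, (k < H)%N -> 0 < t k.
Hypothesis ans_0_10 : forall p, p \in ps -> ans p = 0%N \/ ans p = 10%N.
Hypothesis feas : mvnn_feasible th.
Hypothesis stable : mvnn_rescale_stable s th.

Local Notation h10 := (mvnn_hidden t th 10%:R).

Lemma mvnn_rescale_stable_shrunk_eq0 rho beta :
  (forall k, (k < H)%N -> forall i, 1 - s <= rho k i <= 1) -> 1 - s <= beta <= 1 ->
  mvnn_hinge t ps ans (mvnn_rescale rho beta th) <= mvnn_hinge t ps ans th ->
  (forall k, (k < H)%N -> forall i, rho k i < 1 -> forall j, mW th k i j = 0) /\
  (beta < 1 -> forall k, (k < H)%N -> forall i, mb th k i 0 = 0).
Proof.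
case: stable => /andP[_ s_le1] norm_le rho_s beta_s hinge_le.
have in01 a : 1 - s <= a <= 1 -> 0 <= a <= 1.
  by case/andP=> a_ge a_le1; rewrite a_le1 andbT (le_trans _ a_ge) // subr_ge0.
apply: mvnn_rescale_sqnorm_ge_eq0 (norm_le _ _ rho_s beta_s hinge_le); last exact: in01.
by move=> k kH i; apply: in01; apply: rho_s.
Qed.

Lemma mvnn_rescale_stable_unsaturated : mvnn_unsaturated t th 10%:R.
Proof.
have [/andP[s_gt0 s_le1] _] := stable.
move=> k kH i; rewrite leNgt; apply/negP; set a := mvnn_preact th _ i 0 => sat.
set c := (mW th k *m h10 k) i 0.
have a_def : a = c + mb th k i 0 by rewrite /a mvnn_preactE.
have b_le0 := mvnn_feasible_b i feas kH.
have tk_gt0 := t_gt0 kH.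
have c_gt0 : 0 < c by rewrite (lt_le_trans tk_gt0) // (ltW (lt_le_trans sat _)) // a_def gerDl.
pose r := Num.min s ((a - t k) / c).
have r_gt0 : 0 < r by rewrite lt_min s_gt0 divr_gt0 // subr_gt0.
have r_le_s : r <= s by rewrite ge_min lexx.
have rc_le : r * c <= a - t k by rewrite -ler_pdivlMr // ge_min lexx orbT.
pose rho k' (i' : 'I_(wd d k'.+1)) := if (k' == k) && (i' == i :> nat) then 1 - r else 1.
have rho_s k' (_ : (k' < H)%N) i' : 1 - s <= rho k' i' <= 1.
  by rewrite /rho; case: ifP => _; apply/andP; split; lra.
have rho01 k' i' : 0 <= rho k' i' <= 1.
  by rewrite /rho; case: ifP => _; apply/andP; split; lra.
set th' := mvnn_rescale rho 1 th.
have same10 : forall k, (k <= H)%N -> mvnn_hidden t th' 10%:R k = h10 k.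
  apply: mvnn_hidden_eq => k' k'H i'; rewrite mvnn_preact_rescale mul1r mvnn_hiddenS.
  rewrite mvnn_preactE /rho; case: ifP => [/andP[/eqP ek /eqP ei]|_]; last by rewrite mul1r.
  subst k'; have -> : i' = i by apply: val_inj.
  by rewrite -/c -/a !brelu_sat //; lra.
have feas' : mvnn_feasible th'.
  by apply: mvnn_rescale_feasible => // k' _ i'; case/andP: (rho01 k' i').
have hinge_le : mvnn_hinge t ps ans th' <= mvnn_hinge t ps ans th.
  apply: (mvnn_hinge_le_eval ans_0_10) => [x _||]; last by rewrite /mvnn_eval same10.
    apply: mvnn_eval_le => // [k' k'H i' j|k' _|j].
    - have /andP[rho_ge0 rho_le1] := rho01 k' i'.
      by rewrite mvnn_rescale_W mulr_ge0 ?ler_piMl ?mvnn_feasible_W.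
    - exact: scale1r.
    - by rewrite lexx andbT; case: feas.
  by rewrite !mvnn_eval_at0.
have one_s : 1 - s <= 1 <= (1 : R) by apply/andP; split; lra.
have [W0 _] := mvnn_rescale_stable_shrunk_eq0 rho_s one_s hinge_le.
have : c = 0.
  rewrite /c mxE big1 // => j _; rewrite (W0 k kH i) ?mul0r // /rho !eqxx /=; lra.
lra.
Qed.

Lemma mvnn_rescale_stable_bias0 k : (k < H)%N -> forall i, mb th k i 0 = 0.
Proof.
have [/andP[s_gt0 s_le1] _] := stable; have s_ge0 := ltW s_gt0.
have unsat := mvnn_rescale_stable_unsaturated.
pose rho k' i := 1 - s + s * mvnn_gain t th 10%:R (k := k') i.
have rho_s k' (k'H : (k' < H)%N) i : 1 - s <= rho k' i <= 1.
  have /andP[g_ge0 g_le1] := mvnn_gain_in01 t_gt0 i feas (ler0n _ 10) k'H.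
  have sg_le := ler_piMr s_ge0 g_le1; have sg_ge0 := mulr_ge0 s_ge0 g_ge0.
  by rewrite /rho; apply/andP; split; lra.
set th' := mvnn_rescale rho (1 - s) th.
have preact' k' (k'H : (k' < H)%N) i : mvnn_preact th' (h10 k') i 0
    = (1 - s) * mvnn_preact th (h10 k') i 0 + s * h10 k'.+1 i 0.
  rewrite mvnn_preact_rescale mvnn_preactE /rho.
  by rewrite -(mvnn_gainK t_gt0 i feas (ler0n _ 10) k'H); ring.
have same10 : forall k, (k <= H)%N -> mvnn_hidden t th' 10%:R k = h10 k.
  apply: mvnn_hidden_eq => k' k'H i; rewrite preact' // mvnn_hiddenS.
  by rewrite brelu_mix_id ?unsat ?s_ge0 // ltW ?t_gt0.
have unsat' : mvnn_unsaturated t th' 10%:R.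
  move=> k' k'H i; rewrite (same10 k' (ltnW k'H)) preact' //.
  have a_le : (1 - s) * mvnn_preact th (h10 k') i 0 <= (1 - s) * t k'.
    by rewrite ler_wpM2l ?subr_ge0 ?unsat.
  have u_le : s * h10 k'.+1 i 0 <= s * t k'.
    by rewrite ler_wpM2l // mvnn_hiddenS brelu_le_pos ?unsat // ltW ?t_gt0.
  by apply: le_trans (lerD a_le u_le) _; rewrite -mulrDl subrK mul1r.
have feas' : mvnn_feasible th'.
  apply: mvnn_rescale_feasible; rewrite ?subr_ge0 // => k' k'H i.
  by case/andP: (rho_s k' k'H i) => ? _; lra.
have eval10 : mvnn_eval t th' 10%:R = mvnn_eval t th 10%:R.
  by rewrite /mvnn_eval (same10 H (leqnn H)).
have hinge_le : mvnn_hinge t ps ans th' <= mvnn_hinge t ps ans th.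
  apply: (mvnn_hinge_le_subhom ans_0_10); rewrite ?mvnn_eval_at0 // => x x_le10.
  by apply: mvnn_eval_subhom => //; rewrite ler0n ler_nat.
have one_s : 1 - s <= 1 - s <= 1 by apply/andP; split; lra.
have [_ b0] := mvnn_rescale_stable_shrunk_eq0 rho_s one_s hinge_le.
by apply: b0; rewrite gtrBl.
Qed.

End Stable.
End LocalMinimizer.

Theorem propositionC5 (R : realType) (H : nat) (d : nat -> nat) (t : nat -> R)
  (ps : seq R) (ans : R -> nat) (lam : R) (th : mvnn_params R H d) :
  (forall k, (k < H)%N -> (0 < d k)%N) ->
  (forall k, (k < H)%N -> 0 < t k) ->
  uniq ps -> (forall p, p \in ps -> 0 <= p) ->
  (forall p, 0 <= p -> p < 94%:R / 10%:R -> ans p = 10%N) ->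
  (forall p, p = 94%:R / 10%:R -> ans p = 10%N \/ ans p = 0%N) ->
  (forall p, 94%:R / 10%:R < p -> ans p = 0%N) ->
  0 < lam ->
  mvnn_local_min t ps ans lam th ->
  exists alpha : R, forall x : nat, (x <= 10)%N ->
    mvnn_eval t th x%:R = alpha * x%:R.
Proof.
move=> _ t_gt0 _ ps_ge0 ans_below ans_at ans_above lam_gt0 locmin.
have ans_0_10 p : p \in ps -> ans p = 0%N \/ ans p = 10%N.
  move=> ps_p; case: (ltgtP p (94%:R / 10%:R)) => [p_lt|p_gt|p_eq].
  - by right; apply: ans_below; rewrite ?ps_ge0.
  - by left; apply: ans_above.
  - by case: (ans_at p p_eq); [right|left].
have feas : mvnn_feasible th by case: locmin.
have [s stable] := mvnn_local_min_rescale_stable lam_gt0 locmin.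
have unsat := mvnn_rescale_stable_unsaturated t_gt0 ans_0_10 feas stable.
have bias0 := mvnn_rescale_stable_bias0 t_gt0 ans_0_10 feas stable.
exists (mvnn_eval t th 10%:R / 10%:R) => x x_le10.
rewrite (mvnn_eval_linear t_gt0 bias0 unsat) ?ler0n ?ler_nat //.
ring.
Qed.
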